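(* Let $k\ge 1$ be an integer and let $G$ be a $k$-regular graph. Then $G$ has a $k$-conversion set of size $k$ (that is, $c_k(G)=k$) if and only if $G=H\vee\overline{K_{k-t}}$, where $H$ is a $t$-regular graph of order $k$ and $0\le t<k$.
   Context: For a graph $G=(V,E)$, a positive integer $k$ and a set $S_0\subseteq V$, the irreversible $k$-threshold conversion process is defined by: for $t=1,2,\dots$, $S_t$ is obtained from $S_{t-1}$ by adjoining all vertices having at least $k$ neighbours in $S_{t-1}$. The set $S_0$ is a $k$-conversion set of $G$ if $S_t=V(G)$ for some $t\ge 0$. The $k$-conversion number $c_k(G)$ is the minimum size of a $k$-conversion set of $G$. For graphs $G,H$, $G\vee H$ denotes the join (disjoint union plus all edges between $G$ and $H$), and $\overline{K_m}$ is the edgeless graph on $m$ vertices. *)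

From mathcomp Require Import all_boot.
Set Implicit Arguments. Unset Strict Implicit. Unset Printing Implicit Defensive.

Definition simple_graph (T : finType) (e : rel T) : Prop :=
  symmetric e /\ irreflexive e.

Definition regular (T : finType) (e : rel T) (r : nat) : Prop :=
  forall x : T, #|[set y | e x y]| = r.

Definition conv_step (T : finType) (e : rel T) (k : nat) (S : {set T}) : {set T} :=
  S :|: [set x | k <= #|[set y in S | e x y]|].

Definition conversion_set (T : finType) (e : rel T) (k : nat) (S0 : {set T}) : Prop :=
  exists t : nat, iter t (conv_step e k) S0 = [set: T].

Definition join_rel (T1 T2 : finType) (e1 : rel T1) (e2 : rel T2) : rel (T1 + T2) :=
  fun u v => match u, v with
             | inl a, inl b => e1 a b
             | inr a, inr b => e2 a b
             | _, _ => true
             end.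

Definition edgeless (m : nat) : rel 'I_m := fun _ _ => false.

Definition isomorphic (T1 T2 : finType) (e1 : rel T1) (e2 : rel T2) : Prop :=
  exists f : T1 -> T2, bijective f /\ forall x y, e1 x y = e2 (f x) (f y).

From mathcomp Require Import all_boot.
From mathcomp Require Import zify.
Set Implicit Arguments. Unset Strict Implicit. Unset Printing Implicit Defensive.

(* In a k-regular graph a vertex that joins the process has all k of its
   neighbours already converted.  Hence, by induction along the process, every
   vertex converted outside a k-element seed set S has its neighbourhood inside
   S, and if the process converts everything this neighbourhood is exactly S.
   So the vertices outside S form an independent set completely joined to S,
   and S induces a (k - |V \ S|)-regular graph.  Conversely, in such a join the
   vertices outside S convert in a single step. *)

Lemma nbhs_sub_of_threshold (T : finType) (e : rel T) (k : nat) (S : {set T}) x :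
  regular e k -> k <= #|[set y in S | e x y]| -> [set y | e x y] \subset S.
Proof.
move=> e_reg k_le; have sub : [set y in S | e x y] \subset [set y | e x y].
  by apply/subsetP=> y; rewrite !inE => /andP[].
have <- : [set y in S | e x y] = [set y | e x y].
  by apply/eqP; rewrite eqEcard sub e_reg.
by apply/subsetP=> y; rewrite inE => /andP[].
Qed.

Section KRegularConversion.

Variables (T : finType) (e : rel T) (k : nat).
Hypotheses (e_sym : symmetric e) (e_reg : regular e k).

Lemma conv_iter_nbhs_outside (S0 : {set T}) n x :
  x \in iter n (conv_step e k) S0 -> x \notin S0 -> [set y | e x y] \subset S0.
Proof.
elim: n x => [|n IHn] x /=; first by move=> ->.
rewrite /conv_step inE => /orP[|]; first exact: IHn.
rewrite inE => /(nbhs_sub_of_threshold e_reg) /subsetP nbhs_x x_notin.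
(* A converted neighbour y outside S0 has x in its neighbourhood, forcing x into S0. *)
apply/subsetP=> y; rewrite inE => exy; apply/negPn/negP => y_notin.
have y_conv : y \in iter n (conv_step e k) S0 by apply: nbhs_x; rewrite inE.
have /subsetP/(_ x) := IHn y y_conv y_notin.
by rewrite inE e_sym exy => /(_ isT); apply/negP.
Qed.

Lemma conversion_set_nbhs (S0 : {set T}) :
  #|S0| = k -> conversion_set e k S0 ->
  forall x, x \notin S0 -> [set y | e x y] = S0.
Proof.
move=> cardS0 [t convS0] x x_notin; apply/eqP.
rewrite eqEcard e_reg cardS0 leqnn andbT.
by apply: (conv_iter_nbhs_outside (n := t)); rewrite // convS0 inE.
Qed.

End KRegularConversion.

Lemma regular_card_gt (T : finType) (e : rel T) (k : nat) (x : T) :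
  irreflexive e -> regular e k -> k < #|T|.
Proof.
move=> e_irr e_reg; have := max_card (mem (x |: [set y | e x y])).
by rewrite cardsU1 e_reg inE e_irr.
Qed.

Definition induced (T : finType) (e : rel T) (S : {set T}) : rel {x | x \in S} :=
  fun a b => e (val a) (val b).
Arguments induced {T} e S.

Lemma induced_simple (T : finType) (e : rel T) (S : {set T}) :
  simple_graph e -> simple_graph (induced e S).
Proof. by case=> e_sym e_irr; split=> [a b | a]; [exact: e_sym | exact: e_irr]. Qed.

Lemma card_induced_nbhs (T : finType) (e : rel T) (S : {set T}) a :
  #|[set b | induced e S a b]| = #|[set y in S | e (val a) y]|.
Proof.
rewrite -(card_imset _ val_inj); apply: eq_card => y; rewrite !inE.
apply/imsetP/andP => [[b] | [yS eay]].
  by rewrite inE => eab ->; split; [exact: valP|].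
by exists (exist _ y yS); rewrite ?inE.
Qed.

Lemma isomorphic_sym (T1 T2 : finType) (e1 : rel T1) (e2 : rel T2) :
  isomorphic e2 e1 -> isomorphic e1 e2.
Proof.
case=> f [[g fK gK] e_f]; exists g; split; first by exists f.
by move=> x y; rewrite e_f !gK.
Qed.

Section JoinDecomposition.

Variables (T : finType) (e : rel T) (S : {set T}).
Hypothesis e_sym : symmetric e.
Hypothesis nbhs_outside : forall x y, x \notin S -> e x y = (y \in S).

Lemma adj_inside_outside s y : s \in S -> y \notin S -> e s y.
Proof. by move=> sS y_notin; rewrite e_sym nbhs_outside. Qed.

Lemma card_nbhs_inside (k : nat) s :
  regular e k -> s \in S -> #|[set y in S | e s y]| + #|~: S| = k.
Proof.
move=> e_reg sS; rewrite -(e_reg s) -(cardsID S [set y | e s y]).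
congr (_ + _); apply: eq_card => y; rewrite !inE; first by rewrite andbC.
by case: (boolP (y \in S)) => //= y_notin; rewrite adj_inside_outside.
Qed.

Lemma induced_regular (k : nat) :
  regular e k -> regular (induced e S) (k - #|~: S|).
Proof.
move=> e_reg a; rewrite card_induced_nbhs.
by rewrite -(card_nbhs_inside e_reg (valP a)) addnK.
Qed.

Lemma isomorphic_join_induced :
  isomorphic e (join_rel (induced e S) (@edgeless #|~: S|)).
Proof.
pose g (u : {x | x \in S} + 'I_#|~: S|) : T :=
  match u with inl a => val a | inr j => enum_val j end.
have g_out j : g (inr j) \notin S by have := enum_valP j; rewrite inE.
have g_inj : injective g.
  case=> [a|i] [b|j] /= gE.
  - by congr inl; apply: val_inj.
  - by have := g_out j; rewrite /= -gE (valP a).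
  - by have := g_out i; rewrite /= gE (valP b).
  - by congr inr; apply: enum_val_inj.
apply: isomorphic_sym; exists g; split.
  by apply: (inj_card_bij g_inj); rewrite card_sum card_sig card_ord cardsC.
case=> [a|i] [b|j] //=.
- by rewrite adj_inside_outside ?(valP a) ?g_out.
- by rewrite nbhs_outside ?g_out ?(valP b).
- by rewrite nbhs_outside ?g_out // (negbTE (g_out j)).
Qed.

End JoinDecomposition.

Lemma conv_step_complete_to (T : finType) (e : rel T) (S : {set T}) :
  (forall x y, x \notin S -> y \in S -> e x y) -> conv_step e #|S| S = [set: T].
Proof.
move=> adjS; apply/setP=> x; rewrite !inE.
case: (boolP (x \in S)) => //= x_notin; apply: subset_leq_card.
by apply/subsetP=> y yS; rewrite inE yS adjS.
Qed.

Lemma join_conversion_set (T TH T2 : finType) (e : rel T) (eH : rel TH) (e2 : rel T2) :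
  isomorphic e (join_rel eH e2) ->
  exists S0 : {set T}, #|S0| = #|TH| /\ conversion_set e #|TH| S0.
Proof.
case=> f [[g fK gK] e_f]; pose S0 := [set g (inl a) | a : TH].
have cardS0 : #|S0| = #|TH|.
  by rewrite card_imset ?cardsT // => a b /(can_inj gK) [].
exists S0; split=> //; exists 1; rewrite /= -cardS0.
apply: conv_step_complete_to => x _ x_notin /imsetP[a _ ->].
rewrite e_f gK; case fx: (f x) => [b|j] //.
by move: x_notin; rewrite -(fK x) fx imset_f ?inE.
Qed.

Theorem proposition2p2 (k : nat) (T : finType) (e : rel T) :
  1 <= k -> simple_graph e -> regular e k ->
  ((exists S0 : {set T}, #|S0| = k /\ conversion_set e k S0) <->
   (exists t : nat, t < k /\
      exists (TH : finType) (eH : rel TH),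
        simple_graph eH /\ #|TH| = k /\ regular eH t /\
        isomorphic e (join_rel eH (@edgeless (k - t))))).
Proof.
move=> k_gt0 [e_sym e_irr] e_reg; split.
  case=> S0 [cardS0 convS0].
  have nbhsS0 x y : x \notin S0 -> e x y = (y \in S0).
    by move=> /(conversion_set_nbhs e_sym e_reg cardS0 convS0) <-; rewrite inE.
  have [s0 s0S0] : exists s0, s0 \in S0 by apply/set0Pn; rewrite -card_gt0 cardS0.
  have outside_gt0 : 0 < #|~: S0|.
    by have := regular_card_gt s0 e_irr e_reg; rewrite -(cardsC S0) cardS0; lia.
  have outside_le_k : #|~: S0| <= k.
    by rewrite -(card_nbhs_inside e_sym nbhsS0 e_reg s0S0) leq_addl.
  exists (k - #|~: S0|); split; first lia.
  exists {x | x \in S0}, (induced e S0); split; first exact: induced_simple.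
  split; first by rewrite card_sig cardS0.
  split; first exact: induced_regular.
  by rewrite subKn //; apply: isomorphic_join_induced.
case=> t [_ [TH [eH [_ [<- [_ isoG]]]]]].
exact: join_conversion_set isoG.
Qed.
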